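(* Let $(X,f)$ be a dynamical system and $\mathbf{a}=(a_1,\dots,a_r)\in\mathbb{N}^r$. The following are equivalent: (1) $(X,f)$ is $\mathbf{a}$-transitive; (2) $(X,f)$ is $\mathcal{F}[\mathbf{a}]$-transitive; (3) $(X,f)$ is transitive and $\mathcal{F}[\mathbf{a}]$-central.
   Context: A dynamical system is a pair $(X,f)$ with $X$ a compact metric space and $f:X\to X$ continuous. $\mathbb{N}=\{1,2,\dots\}$, $\mathbb{Z}_+=\{0,1,2,\dots\}$. $N(U,V)=\{n\in\mathbb{N}: U\cap f^{-n}(V)\neq\emptyset\}$. $(X,f)$ is transitive if $N(U,V)\neq\emptyset$ for all non-empty open $U,V$. For a family $\mathcal{F}$ of subsets of $\mathbb{N}$, $(X,f)$ is $\mathcal{F}$-transitive if $N(U,V)\in\mathcal{F}$ for all non-empty open $U,V$, and $\mathcal{F}$-central if $N(U,U)\in\mathcal{F}$ for all non-empty open $U$. For $\mathbf{a}\in\mathbb{N}^r$, $f^{(\mathbf{a})}=f^{a_1}\times\dots\times f^{a_r}:X^r\to X^r$, and $(X,f)$ is $\mathbf{a}$-transitive if $(X^r,f^{(\mathbf{a})})$ is transitive. $\mathcal{F}[\mathbf{a}]$ is the collection of all $F\subset\mathbb{N}$ such that for every $(n_1,\dots,n_r)\in\mathbb{Z}_+^r$ there exists $k\in\mathbb{N}$ with $ka_i+n_i\in F$ for all $i=1,\dots,r$. *)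

From Stdlib Require Import Reals List.
Open Scope R_scope.

Definition m_open (M : Metric_Space) (U : Base M -> Prop) : Prop :=
  forall x, U x -> exists eps, eps > 0 /\
    forall y, dist M x y < eps -> U y.

Definition m_compact (M : Metric_Space) : Prop :=
  forall (I : Type) (C : I -> Base M -> Prop),
    (forall i, m_open M (C i)) ->
    (forall x, exists i, C i x) ->
    exists l : list I, forall x, exists i, In i l /\ C i x.

Definition m_continuous (M : Metric_Space) (f : Base M -> Base M) : Prop :=
  forall x eps, eps > 0 -> exists delta, delta > 0 /\
    forall y, dist M x y < delta -> dist M (f x) (f y) < eps.

Definition dynamical_system (M : Metric_Space) (f : Base M -> Base M) : Prop :=
  m_compact M /\ m_continuous M f.

(* Index set {0,...,r-1}; X^r is (Fin r -> X) with the product topology. *)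
Definition Fin (r : nat) : Type := { i : nat | (i < r)%nat }.

Definition prod_open (M : Metric_Space) (r : nat) (W : (Fin r -> Base M) -> Prop) : Prop :=
  forall x, W x -> exists eps, eps > 0 /\
    forall y, (forall i, dist M (x i) (y i) < eps) -> W y.

Definition Nset {T : Type} (g : T -> T) (U V : T -> Prop) (n : nat) : Prop :=
  (1 <= n)%nat /\ exists x, U x /\ V (Nat.iter n g x).

Definition transitive_top {T : Type} (op : (T -> Prop) -> Prop) (g : T -> T) : Prop :=
  forall U V, op U -> op V -> (exists x, U x) -> (exists y, V y) ->
    exists n, Nset g U V n.

Definition transitive (M : Metric_Space) (f : Base M -> Base M) : Prop :=
  transitive_top (m_open M) f.

Definition F_transitive (M : Metric_Space) (f : Base M -> Base M)
  (F : (nat -> Prop) -> Prop) : Prop :=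
  forall U V, m_open M U -> m_open M V -> (exists x, U x) -> (exists y, V y) ->
    F (Nset f U V).

Definition F_central (M : Metric_Space) (f : Base M -> Base M)
  (F : (nat -> Prop) -> Prop) : Prop :=
  forall U, m_open M U -> (exists x, U x) -> F (Nset f U U).

Definition f_prod (M : Metric_Space) (f : Base M -> Base M) (r : nat)
  (a : Fin r -> nat) (x : Fin r -> Base M) : Fin r -> Base M :=
  fun i => Nat.iter (a i) f (x i).

Definition a_transitive (M : Metric_Space) (f : Base M -> Base M) (r : nat)
  (a : Fin r -> nat) : Prop :=
  transitive_top (prod_open M r) (f_prod M f r a).

Definition Fa (r : nat) (a : Fin r -> nat) (F : nat -> Prop) : Prop :=
  (forall m, F m -> (1 <= m)%nat) /\
  forall n : Fin r -> nat, exists k, (1 <= k)%nat /\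
    forall i, F (k * a i + n i)%nat.

From Stdlib Require Import Reals List Lra Lia ClassicalEpsilon.
Open Scope R_scope.

(* Since the product topology on X^r is generated by boxes U_1 x ... x U_r,
   (1) says that for all nonempty open U_i, V_i some k >= 1 has
   f^{k a_i}(U_i) meeting V_i for every i (a_transitive_iff_boxes).
   (1) => (2): apply (1) to the boxes U^r and f^{-n_1}(V) x ... x f^{-n_r}(V);
   these are nonempty because a transitive map has f^{-n}(V) nonempty.
   (2) => (3) is immediate.
   (3) => (1): transitivity lets us pull finitely many pairs (U_i, V_i) back
   to one nonempty open W with f^{t_i}(W) inside V_i and f^{n_i + t_i}(W)
   inside U_i (transitive_finite_family); a return time k a_i + n_i of W to
   itself then yields a point of U_i sent into V_i by f^{k a_i}. *)

Section MetricFacts.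
Variable M : Metric_Space.

Lemma ball_open (x : Base M) (e : R) : m_open M (fun z => dist M x z < e).
Proof.
  intros z Hz. exists (e - dist M x z). split; [lra|].
  intros y Hy. pose proof (dist_tri M x y z). lra.
Qed.

Lemma ball_center (x : Base M) (e : R) : e > 0 -> dist M x x < e.
Proof. intros He. rewrite (proj2 (dist_refl M x x) eq_refl). lra. Qed.

Lemma open_full : m_open M (fun _ => True).
Proof. intros x _. exists 1. split; [lra|auto]. Qed.

Lemma open_inter (U V : Base M -> Prop) :
  m_open M U -> m_open M V -> m_open M (fun z => U z /\ V z).
Proof.
  intros HU HV x [Ux Vx].
  destruct (HU x Ux) as [e1 [He1 H1]], (HV x Vx) as [e2 [He2 H2]].
  pose proof (Rmin_l e1 e2); pose proof (Rmin_r e1 e2).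
  exists (Rmin e1 e2). split; [apply Rmin_pos; lra|].
  intros y Hy. split; [apply H1 | apply H2]; lra.
Qed.

Lemma open_preimage (g : Base M -> Base M) (U : Base M -> Prop) :
  m_continuous M g -> m_open M U -> m_open M (fun z => U (g z)).
Proof.
  intros Hg HU x Ux. destruct (HU _ Ux) as [e [He H]].
  destruct (Hg x e He) as [d [Hd Hd']]. exists d. split; auto.
Qed.

Lemma iter_continuous (g : Base M -> Base M) (n : nat) :
  m_continuous M g -> m_continuous M (Nat.iter n g).
Proof.
  intros Hg. induction n as [|n IH]; simpl.
  - intros x e He. exists e. split; auto.
  - intros x e He. destruct (Hg (Nat.iter n g x) e He) as [d [Hd H1]].
    destruct (IH x d Hd) as [d' [Hd' H2]]. exists d'. split; [exact Hd'|].
    intros y Hy. apply H1, H2, Hy.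
Qed.

End MetricFacts.

Lemma Fin_eq (r : nat) (i j : Fin r) : proj1_sig i = proj1_sig j -> i = j.
Proof.
  destruct i as [i Hi], j as [j Hj]; simpl; intros ->.
  f_equal. apply Peano_dec.le_unique.
Qed.

Lemma Fin_gather (r : nat) (State : Type) (Inv : State -> Prop)
  (P : State -> Fin r -> Prop) (s0 : State) :
  Inv s0 ->
  (forall s i, Inv s -> exists s', Inv s' /\ P s' i /\ forall j, P s j -> P s' j) ->
  exists s, Inv s /\ forall i, P s i.
Proof.
  intros H0 Hstep.
  assert (Hprefix : forall m, (m <= r)%nat ->
            exists s, Inv s /\ forall i, (proj1_sig i < m)%nat -> P s i).
  { induction m as [|m IH]; intros Hm.
    - exists s0. split; [exact H0|]. intros i Hi. lia.
    - destruct (IH ltac:(lia)) as [s [Hs HP]].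
      destruct (Hstep s (exist (fun i => (i < r)%nat) m Hm) Hs)
        as [s' [Hs' [HPm Hkeep]]].
      exists s'. split; [exact Hs'|]. intros i Hi.
      destruct (Nat.eq_dec (proj1_sig i) m) as [E|E].
      + rewrite (Fin_eq r i (exist _ m Hm) E). exact HPm.
      + apply Hkeep, HP. lia. }
  destruct (Hprefix r (le_n r)) as [s [Hs HP]].
  exists s. split; [exact Hs|]. intros i. apply HP, proj2_sig.
Qed.

Lemma uniform_radius (r : nat) (Q : Fin r -> R -> Prop) :
  (forall i e e', 0 < e' <= e -> Q i e -> Q i e') ->
  (forall i, exists e, e > 0 /\ Q i e) ->
  exists e, e > 0 /\ forall i, Q i e.
Proof.
  intros Hshrink Hex.
  apply (Fin_gather r R (fun e => e > 0) (fun e i => Q i e) 1); [lra|].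
  intros e i He. destruct (Hex i) as [ei [Hei HQ]].
  pose proof (Rmin_l e ei); pose proof (Rmin_r e ei).
  assert (0 < Rmin e ei) by (apply Rmin_pos; lra).
  exists (Rmin e ei). split; [lra|]. split.
  - apply (Hshrink i ei); [lra | exact HQ].
  - intros j HQj. apply (Hshrink j e); [lra | exact HQj].
Qed.

Definition box (M : Metric_Space) (r : nat) (U : Fin r -> Base M -> Prop)
  (x : Fin r -> Base M) : Prop :=
  forall i, U i (x i).

Lemma box_open (M : Metric_Space) (r : nat) (U : Fin r -> Base M -> Prop) :
  (forall i, m_open M (U i)) -> prod_open M r (box M r U).
Proof.
  intros HU x Hx.
  destruct (uniform_radius r (fun i e => forall y, dist M (x i) y < e -> U i y))
    as [e [He H]].
  - intros i e e' He' H y Hy. apply H. lra.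
  - intros i. exact (HU i (x i) (Hx i)).
  - exists e. split; auto. intros y Hy i. apply H, Hy.
Qed.

Lemma box_nonempty (M : Metric_Space) (r : nat) (U : Fin r -> Base M -> Prop) :
  (forall i, exists x, U i x) -> exists x, box M r U x.
Proof. intros H. exact (choice _ H). Qed.

Lemma Nset_mono {T : Type} (g : T -> T) (U U' V V' : T -> Prop) (n : nat) :
  (forall x, U x -> U' x) -> (forall x, V x -> V' x) ->
  Nset g U V n -> Nset g U' V' n.
Proof. intros HU HV [Hn [x [Ux Vx]]]. split; [exact Hn|]. exists x; auto. Qed.

Lemma Nset_shift {T : Type} (g : T -> T) (U V : T -> Prop) (m n : nat) :
  Nset g U (fun z => V (Nat.iter n g z)) m -> Nset g U V (m + n).
Proof.
  intros [Hm [x [Ux Vx]]]. split; [lia|].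
  exists x. split; [exact Ux|]. rewrite Nat.add_comm, Nat.iter_add. exact Vx.
Qed.

Section TransitiveMaps.
Variables (M : Metric_Space) (f : Base M -> Base M).
Hypotheses (Hf : m_continuous M f) (Ht : transitive M f).

(* f^{-n}(V) is nonempty for every nonempty open V: transitivity from X to V
   gives a point of f^{-1}(V'), where V' is the open set f^{-(n-1)}(V). *)
Lemma transitive_preimage_nonempty (n : nat) (V : Base M -> Prop) :
  m_open M V -> (exists y, V y) -> exists z, V (Nat.iter n f z).
Proof.
  revert V. induction n as [|n IH]; intros V HV [y Vy].
  - exists y. exact Vy.
  - destruct (Ht (fun _ => True) V (open_full M) HV (ex_intro _ y I)
                 (ex_intro _ y Vy)) as [m [Hm [x [_ Hx]]]].
    destruct m as [|m]; [lia|].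
    destruct (IH (fun z => V (f z))) as [z Hz].
    + apply open_preimage; auto.
    + exists (Nat.iter m f x). exact Hx.
    + exists z. exact Hz.
Qed.

(* Given nonempty open W, U, V, there is a nonempty open W' inside V with
   f^q(W') inside U and f^d(W') inside W: go from U into W, then from V into
   the part of U that enters W. *)
Lemma transitive_extend_pair (W U V : Base M -> Prop) :
  m_open M W -> m_open M U -> m_open M V ->
  (exists w, W w) -> (exists u, U u) -> (exists v, V v) ->
  exists W' q d, m_open M W' /\ (exists w, W' w) /\
    forall w, W' w -> V w /\ U (Nat.iter q f w) /\ W (Nat.iter d f w).
Proof.
  intros HW HU HV HWn HUn HVn.
  destruct (Ht U W HU HW HUn HWn) as [p [_ [x [Ux Wx]]]].
  set (W1 := fun z => U z /\ W (Nat.iter p f z)).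
  assert (HW1 : m_open M W1).
  { apply open_inter; [exact HU|]. apply open_preimage; [|exact HW].
    apply iter_continuous, Hf. }
  destruct (Ht V W1 HV HW1 HVn (ex_intro _ x (conj Ux Wx)))
    as [q [_ [y [Vy W1y]]]].
  exists (fun z => V z /\ W1 (Nat.iter q f z)), q, (p + q)%nat.
  split.
  { apply open_inter; [exact HV|]. apply open_preimage; [|exact HW1].
    apply iter_continuous, Hf. }
  split; [exists y; split; assumption|].
  intros w [Vw [Uw Ww]]. rewrite Nat.iter_add. auto.
Qed.

Lemma transitive_finite_family (r : nat) (U V : Fin r -> Base M -> Prop)
  (z0 : Base M) :
  (forall i, m_open M (U i)) -> (forall i, m_open M (V i)) ->
  (forall i, exists x, U i x) -> (forall i, exists x, V i x) ->
  exists W, (m_open M W /\ exists w, W w) /\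
    forall i, exists n t, forall w, W w ->
      V i (Nat.iter t f w) /\ U i (Nat.iter (n + t) f w).
Proof.
  intros HU HV HUn HVn.
  apply (Fin_gather r _ (fun W => m_open M W /\ exists w, W w) _
           (fun _ => True)); [split; [apply open_full | exists z0; exact I]|].
  intros W i [HWo HWn].
  destruct (transitive_extend_pair W (U i) (V i) HWo (HU i) (HV i) HWn
              (HUn i) (HVn i)) as [W' [q [d [HW'o [HW'n HW']]]]].
  exists W'. split; [split; assumption|]. split.
  - exists q, 0%nat. intros w Hw. destruct (HW' w Hw) as [Vw [Uw _]].
    rewrite Nat.add_0_r. split; assumption.
  - intros j [n [t Hj]]. exists n, (t + d)%nat. intros w Hw.
    destruct (HW' w Hw) as [_ [_ Ww]].
    rewrite Nat.add_assoc, !(Nat.iter_add _ d). exact (Hj _ Ww).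
Qed.

End TransitiveMaps.

Lemma f_prod_iter (M : Metric_Space) (f : Base M -> Base M) (r : nat)
  (a : Fin r -> nat) (k : nat) (x : Fin r -> Base M) (i : Fin r) :
  Nat.iter k (f_prod M f r a) x i = Nat.iter (k * a i) f (x i).
Proof.
  induction k as [|k IH]; [reflexivity|].
  rewrite Nat.iter_succ. unfold f_prod at 1. rewrite IH, <- Nat.iter_add.
  f_equal; simpl; lia.
Qed.

Lemma Nset_box_coord (M : Metric_Space) (f : Base M -> Base M) (r : nat)
  (a : Fin r -> nat) (U V : Fin r -> Base M -> Prop) (k : nat) (i : Fin r) :
  (1 <= a i)%nat ->
  Nset (f_prod M f r a) (box M r U) (box M r V) k -> Nset f (U i) (V i) (k * a i).
Proof.
  intros Hai [Hk [x [Ux Vx]]]. split; [nia|].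
  exists (x i). split; [apply Ux|]. rewrite <- f_prod_iter. apply Vx.
Qed.

Lemma Nset_box_of_coords (M : Metric_Space) (f : Base M -> Base M) (r : nat)
  (a : Fin r -> nat) (U V : Fin r -> Base M -> Prop) (k : nat) :
  (1 <= k)%nat ->
  (forall i, exists x, U i x /\ V i (Nat.iter (k * a i) f x)) ->
  Nset (f_prod M f r a) (box M r U) (box M r V) k.
Proof.
  intros Hk H. destruct (choice _ H) as [x Hx].
  split; [exact Hk|]. exists x. split; intros i; [apply Hx|].
  rewrite f_prod_iter. apply Hx.
Qed.

Definition box_transitive (M : Metric_Space) (f : Base M -> Base M) (r : nat)
  (a : Fin r -> nat) : Prop :=
  forall U V : Fin r -> Base M -> Prop,
    (forall i, m_open M (U i)) -> (forall i, m_open M (V i)) ->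
    (forall i, exists x, U i x) -> (forall i, exists x, V i x) ->
    exists k, Nset (f_prod M f r a) (box M r U) (box M r V) k.

(* Boxes are open and every nonempty product-open set contains a box of
   balls, so box transitivity is transitivity of f^(a). *)
Lemma a_transitive_iff_boxes (M : Metric_Space) (f : Base M -> Base M)
  (r : nat) (a : Fin r -> nat) :
  a_transitive M f r a <-> box_transitive M f r a.
Proof.
  split.
  - intros HA U V HU HV HUn HVn.
    apply HA; [apply box_open; exact HU | apply box_open; exact HV
              | apply box_nonempty; exact HUn | apply box_nonempty; exact HVn].
  - intros HB A B HA HB' [x Ax] [y By].
    destruct (HA x Ax) as [e [He HeA]], (HB' y By) as [e' [He' HeB]].
    destruct (HB (fun i z => dist M (x i) z < e) (fun i z => dist M (y i) z < e'))
      as [k Hk].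
    + intros i. apply ball_open.
    + intros i. apply ball_open.
    + intros i. exists (x i). apply ball_center, He.
    + intros i. exists (y i). apply ball_center, He'.
    + exists k. exact (Nset_mono _ _ _ _ _ _ HeA HeB Hk).
Qed.

(* Projecting to a coordinate i0 with a_{i0} >= 1 shows that f is transitive. *)
Lemma a_transitive_transitive (M : Metric_Space) (f : Base M -> Base M)
  (r : nat) (a : Fin r -> nat) (i0 : Fin r) :
  (1 <= a i0)%nat -> a_transitive M f r a -> transitive M f.
Proof.
  intros Ha0 HA U V HU HV HUn HVn.
  apply a_transitive_iff_boxes in HA.
  destruct (HA (fun _ => U) (fun _ => V)) as [k Hk]; auto.
  exists (k * a i0)%nat. exact (Nset_box_coord M f r a _ _ k i0 Ha0 Hk).
Qed.

(* (1) => (2): a return time k of f^(a) from U^r to the box of the sets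
   f^{-n_i}(V) gives k a_i + n_i in N(U,V) for every i. *)
Lemma a_transitive_Fa_transitive (M : Metric_Space) (f : Base M -> Base M)
  (r : nat) (a : Fin r -> nat) :
  (1 <= r)%nat -> m_continuous M f -> (forall i, (1 <= a i)%nat) ->
  a_transitive M f r a -> F_transitive M f (Fa r a).
Proof.
  intros Hr Hf Ha HA.
  assert (Ht : transitive M f)
    by exact (a_transitive_transitive M f r a (exist _ 0%nat Hr) (Ha _) HA).
  apply a_transitive_iff_boxes in HA.
  intros U V HU HV HUn HVn. split; [intros m [Hm _]; exact Hm|]. intros n.
  destruct (HA (fun _ => U) (fun i z => V (Nat.iter (n i) f z))) as [k Hk].
  - intros i. exact HU.
  - intros i. apply open_preimage; [apply iter_continuous, Hf | exact HV].
  - intros i. exact HUn.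
  - intros i. apply transitive_preimage_nonempty; assumption.
  - exists k. split; [exact (proj1 Hk)|]. intros i.
    apply Nset_shift. exact (Nset_box_coord M f r a _ _ k i (Ha i) Hk).
Qed.

Lemma Fa_nonempty (r : nat) (a : Fin r -> nat) (S : nat -> Prop) :
  (1 <= r)%nat -> Fa r a S -> exists n, S n.
Proof.
  intros Hr [_ HS]. destruct (HS (fun _ => 0%nat)) as [k [_ Hk]].
  eexists. exact (Hk (exist _ 0%nat Hr)).
Qed.

Lemma F_transitive_transitive (M : Metric_Space) (f : Base M -> Base M)
  (F : (nat -> Prop) -> Prop) :
  (forall S, F S -> exists n, S n) -> F_transitive M f F -> transitive M f.
Proof. intros HF Htr U V HU HV HUn HVn. apply HF, Htr; assumption. Qed.

Lemma F_transitive_central (M : Metric_Space) (f : Base M -> Base M)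
  (F : (nat -> Prop) -> Prop) :
  F_transitive M f F -> F_central M f F.
Proof. intros Htr U HU HUn. apply Htr; assumption. Qed.

(* (3) => (1): pull the pairs (U_i, V_i) back to W; a return time
   k a_i + n_i of W to itself at a point w makes f^{n_i + t_i}(w) a point of
   U_i that f^{k a_i} sends to f^{t_i}(f^{k a_i + n_i}(w)), a point of V_i. *)
Lemma transitive_central_a_transitive (M : Metric_Space) (f : Base M -> Base M)
  (r : nat) (a : Fin r -> nat) :
  (1 <= r)%nat -> m_continuous M f ->
  transitive M f -> F_central M f (Fa r a) -> a_transitive M f r a.
Proof.
  intros Hr Hf Ht Hc. apply a_transitive_iff_boxes.
  intros U V HU HV HUn HVn.
  destruct (HUn (exist _ 0%nat Hr)) as [z0 _].
  destruct (transitive_finite_family M f Hf Ht r U V z0 HU HV HUn HVn)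
    as [W [[HWo HWn] HW]].
  destruct (choice _ HW) as [n Hn].
  destruct (proj2 (Hc W HWo HWn) n) as [k [Hk Hret]].
  exists k. apply Nset_box_of_coords; [exact Hk|]. intros i.
  destruct (Hn i) as [t Hpull], (Hret i) as [_ [w [Ww Wret]]].
  exists (Nat.iter (n i + t) f w). split; [apply (Hpull w Ww)|].
  rewrite <- Nat.iter_add.
  replace (k * a i + (n i + t))%nat with (t + (k * a i + n i))%nat by lia.
  rewrite Nat.iter_add. apply (Hpull _ Wret).
Qed.

Theorem theorem4p6 (M : Metric_Space) (f : Base M -> Base M)
  (r : nat) (a : Fin r -> nat)
  (Hsys : dynamical_system M f)
  (Hr : (1 <= r)%nat)
  (Ha : forall i, (1 <= a i)%nat) :
  (a_transitive M f r a <-> F_transitive M f (Fa r a)) /\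
  (F_transitive M f (Fa r a) <->
     (transitive M f /\ F_central M f (Fa r a))).
Proof.
  destruct Hsys as [_ Hf].
  pose proof (a_transitive_Fa_transitive M f r a Hr Hf Ha) as H12.
  assert (H23 : F_transitive M f (Fa r a) ->
                transitive M f /\ F_central M f (Fa r a)).
  { intros HF. split.
    - exact (F_transitive_transitive M f _ (fun S => Fa_nonempty r a S Hr) HF).
    - exact (F_transitive_central M f _ HF). }
  assert (H31 : transitive M f /\ F_central M f (Fa r a) -> a_transitive M f r a)
    by (intros [Ht Hc]; exact (transitive_central_a_transitive M f r a Hr Hf Ht Hc)).
  split; split; auto.
Qed.
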